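(* Let $d$ and $k$ be positive integers and $\mathcal{X}$ a subset of $\mathbb{P}^d_\circ$ with $\kappa(\mathcal{X})\le k$. Then $|\mathcal{X}|\le\lfloor\lambda(d,k)\rfloor$. Moreover, let $p$ be the smallest positive integer with $k<\kappa_p$; if in addition (i) $|\mathcal{X}|=\lfloor\lambda(d,k)\rfloor$, (ii) $d$ is a proper divisor of $p$ (that is, $d$ divides $p$ and $d\neq p$), and (iii) $p/d$ divides $k-\kappa_{p-1}$, then $$B(d,p-1)\cap\mathbb{P}^d_\circ\subset\mathcal{X}\subset B(d,p)\cap\mathbb{P}^d_\circ.$$
   Context: A point of $\mathbb{Z}^d$ is primitive if its coordinates are relatively prime; $\mathbb{P}^d_\circ$ denotes the set of primitive points of $\mathbb{Z}^d$ whose first non-zero coordinate is positive. For a finite $\mathcal{X}\subset\mathbb{R}^d$, $\kappa(\mathcal{X})=\max_{1\le i\le d}\sum_{x\in\mathcal{X}}|x_i|$. $B(d,p)=\{x\in\mathbb{R}^d:\|x\|_1\le p\}$; for integers $p\ge0$, $N_p=|B(d,p)\cap\mathbb{P}^d_\circ|$ and $\kappa_p=\kappa(B(d,p)\cap\mathbb{P}^d_\circ)$ (so $N_0=\kappa_0=0$). For a positive integer $k$, with $p$ the smallest positive integer such that $k<\kappa_p$, $\lambda(d,k)=N_{p-1}+\frac{d(k-\kappa_{p-1})}{p}$. *)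

From HB Require Import structures.
From mathcomp Require Import all_boot all_order all_algebra.
Set Implicit Arguments. Unset Strict Implicit. Unset Printing Implicit Defensive.
Import Order.TTheory GRing.Theory Num.Theory.

Definition primitive (d : nat) (x : 'rV[int]_d) : bool :=
  (\big[gcdn/0%N]_(i < d) `|x ord0 i|%N) == 1%N.

Definition first_pos (d : nat) (x : 'rV[int]_d) : bool :=
  [exists i : 'I_d, (0 < x ord0 i)%R && [forall j : 'I_d, (j < i)%N ==> (x ord0 j == 0)]].

Definition inP (d : nat) (x : 'rV[int]_d) : bool := primitive x && first_pos x.

Definition l1 (d : nat) (x : 'rV[int]_d) : nat := \sum_(i < d) `|x ord0 i|%N.

Definition inBP (d p : nat) (x : 'rV[int]_d) : bool := (l1 x <= p)%N && inP x.

(* kappa of a finite set (given as a duplicate-free list) *)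
Definition kappa (d : nat) (X : seq 'rV[int]_d) : nat :=
  \max_(i < d) \sum_(x <- X) `|x ord0 i|%N.

(* all integer points of the box [-p,p]^d (duplicate-free) *)
Definition box (d p : nat) : seq 'rV[int]_d :=
  [seq map_mx (fun a : 'I_(2 * p).+1 => ((a : nat)%:Z - p%:Z)%R) v
  | v : 'rV['I_(2 * p).+1]_d].

Definition BP (d p : nat) : seq 'rV[int]_d := [seq x <- box d p | inBP p x].

Definition Np (d p : nat) : nat := size (BP d p).
Definition kappap (d p : nat) : nat := kappa (BP d p).

(* lambda(d,k), given p = smallest positive integer with k < kappa_p *)
Definition lambda (d k p : nat) : rat :=
  ((Np d p.-1)%:Q + (((d : int) * ((k : int) - (kappap d p.-1 : int)))%:~R : rat) / p%:Q)%R.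

From HB Require Import structures.
From mathcomp Require Import all_boot all_order all_algebra.
From mathcomp Require Import zify perm.
Import Order.TTheory GRing.Theory Num.Theory.
Set Implicit Arguments. Unset Strict Implicit. Unset Printing Implicit Defensive.

(* Let B = B(d, p-1) ∩ P°, N = |B| and K = κ_{p-1} <= k.  Exchanging two
   coordinates and then fixing the sign is an l1-preserving involution of B,
   so all coordinate sums over B are equal and Σ_{x∈B} |x|_1 = dK, whereas
   Σ_{x∈X} |x|_1 <= dk.  Points of X outside B have |x|_1 >= p and points of B
   missing from X have |x|_1 <= p-1, so comparing the two sums gives
     p|X| + |B \ X| + Σ_{x∈X\B} (|x|_1 - p) <= pN + d(k-K),
   i.e. |X| <= ⌊λ⌋ = ⌊(pN + d(k-K))/p⌋.  Under (ii) and (iii) p divides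
   d(k-K), so equality in (i) forces both error terms to vanish. *)

Section NatSeqSums.
Variables (I : eqType) (r : seq I) (P : pred I).

Lemma sum_nat_const_seq c : \sum_(i <- r | P i) c = c * count P r.
Proof. by rewrite big_const_seq iter_addn_0. Qed.

Lemma leq_sum_const_seq (F : I -> nat) c :
  {in r, forall i, P i -> F i <= c} -> \sum_(i <- r | P i) F i <= c * count P r.
Proof.
move=> leFc; rewrite -sum_nat_const_seq big_seq_cond [X in _ <= X]big_seq_cond.
by apply: leq_sum => i /andP[ri Pi]; apply: leFc.
Qed.

Lemma sum_nat_sub_const (F : I -> nat) c : (forall i, P i -> c <= F i) ->
  \sum_(i <- r | P i) F i = c * count P r + \sum_(i <- r | P i) (F i - c).
Proof.
by move=> lecF; rewrite -sum_nat_const_seq -big_split; apply: eq_bigr => i /lecF/subnKC.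
Qed.

End NatSeqSums.

Lemma perm_map_involution_in (T : eqType) (f : T -> T) (s : seq T) :
  uniq s -> {in s, forall x, f x \in s} -> {in s, forall x, f (f x) = x} ->
  perm_eq (map f s) s.
Proof.
move=> us fs ffs; apply: uniq_perm => //.
  by rewrite (map_inj_in_uniq _) // => x y xs ys /(congr1 f); rewrite !ffs.
move=> x; apply/mapP/idP => [[y ys ->] | xs]; first exact: fs.
by exists (f x); rewrite ?ffs ?fs.
Qed.

Section Enumeration.
Variable d : nat.

Lemma absz_coord_le_l1 (x : 'rV[int]_d) i : (`|x ord0 i| <= l1 x)%N.
Proof. by rewrite /l1 (bigD1 i) //= leq_addr. Qed.

Lemma uniq_box q : uniq (box d q).
Proof.
rewrite map_inj_uniq ?enum_uniq // => v w /rowP vw; apply/rowP => i.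
by apply/val_inj/eqP; have := vw i; rewrite !mxE => /addIr/eqP.
Qed.

Lemma mem_box q (x : 'rV[int]_d) : (l1 x <= q)%N -> x \in box d q.
Proof.
move=> l1x; pose v : 'rV['I_(2 * q).+1]_d := (\row_(i < d) inord (absz (x ord0 i + q%:Z)))%R.
suff -> : x = map_mx (fun a : 'I_(2 * q).+1 => (a%:Z - q%:Z)%R) v.
  exact/map_f/mem_enum.
apply/rowP => i; change (x 0%R i) with (x ord0 i).
have := leq_trans (absz_coord_le_l1 x i) l1x.
by rewrite !mxE; move: (x ord0 i) => a xq; rewrite inordK; lia.
Qed.

Lemma mem_BP q (x : 'rV[int]_d) : (x \in BP d q) = inBP q x.
Proof. by rewrite mem_filter andb_idr // => /andP[/mem_box]. Qed.

Lemma uniq_BP q : uniq (BP d q).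
Proof. exact/filter_uniq/uniq_box. Qed.

Lemma BP0 : BP d 0 = [::].
Proof.
apply/eqP; rewrite -[_ == _]negbK -has_filter; apply/hasPn => x _.
apply/negP => /andP[l1x /andP[primx _]]; move: primx; rewrite /primitive big1 // => i _.
by apply/eqP; rewrite -leqn0 (leq_trans (absz_coord_le_l1 x i)).
Qed.

Lemma kappap0 : kappap d 0 = 0.
Proof. by rewrite /kappap BP0 /kappa big1 // => i _; rewrite big_nil. Qed.

End Enumeration.

Section CoordinateSymmetry.
Variable d : nat.
Implicit Types (x y : 'rV[int]_d) (s : 'S_d).

Lemma l1_perm_absz s x y :
  (forall k, `|y ord0 k| = `|x ord0 (s k)|) -> l1 y = l1 x.
Proof.
by move=> yx; rewrite /l1 [RHS](reindex_inj (@perm_inj _ s)); apply: eq_bigr.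
Qed.

Lemma primitive_perm_absz s x y :
  (forall k, `|y ord0 k| = `|x ord0 (s k)|) -> primitive y = primitive x.
Proof.
move=> yx; rewrite /primitive [in RHS](reindex_inj (@perm_inj _ s)) /=.
by under eq_bigr do rewrite yx.
Qed.

Lemma first_posN x : first_pos x -> ~~ first_pos (- x)%R.
Proof.
case/existsP=> a /andP[xa_gt0 /forallP xa_first].
apply/existsP=> -[b /andP[]]; rewrite mxE oppr_gt0 => xb_lt0 /forallP xb_first.
case: (ltngtP a b) => [ab | ba | /val_inj ab].
- have /implyP/(_ ab) := xb_first a; rewrite mxE oppr_eq0 => /eqP xa0.
  by rewrite xa0 in xa_gt0.
- by have /implyP/(_ ba)/eqP xb0 := xa_first b; rewrite xb0 in xb_lt0.
- by move: xb_lt0; rewrite -ab => /lt_trans/(_ xa_gt0); rewrite ltxx.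
Qed.

Lemma first_posVN x : primitive x -> first_pos x || first_pos (- x)%R.
Proof.
move=> primx; have [k xk_neq0] : exists k, x ord0 k != 0%R.
  apply/existsP; move: primx; apply: contraLR => /existsPn x0.
  by rewrite /primitive big1 // => k _; move/negPn/eqP: (x0 k) => ->.
case: (@arg_minnP _ k (fun k => x ord0 k != 0%R) val xk_neq0) => m xm_neq0 m_min.
have zero_before_m (j : 'I_d) : (j < m)%N ==> (x ord0 j == 0%R).
  by apply/implyP => jm; apply: contraTT jm => /m_min; rewrite -leqNgt.
case: (ltrgt0P (x ord0 m)) xm_neq0 => // xm_sign _; apply/orP; [left | right].
  by apply/existsP; exists m; rewrite xm_sign; apply/forallP.
apply/existsP; exists m; rewrite mxE oppr_gt0 xm_sign.
by apply/forallP => j; rewrite mxE oppr_eq0.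
Qed.

Definition sign_rep x := if first_pos x then x else (- x)%R.

Lemma sign_rep_id x : first_pos x -> sign_rep x = x.
Proof. by rewrite /sign_rep => ->. Qed.

Lemma sign_repN x : primitive x -> sign_rep (- x)%R = sign_rep x.
Proof.
move=> primx; rewrite /sign_rep; case: ifP => [fNx | nfNx].
  by have := first_posN fNx; rewrite opprK => /negbTE ->.
by rewrite opprK; have := first_posVN primx; rewrite nfNx orbF => ->.
Qed.

Lemma absz_sign_rep x k : `|sign_rep x ord0 k| = `|x ord0 k|.
Proof. by rewrite /sign_rep; case: ifP; rewrite ?mxE ?abszN. Qed.

Lemma inP_sign_rep x : primitive x -> inP (sign_rep x).
Proof.
move=> primx; apply/andP; split.
  by rewrite (primitive_perm_absz (s := 1) (x := x)) // => k; rewrite absz_sign_rep perm1.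
by rewrite /sign_rep; case: ifP => // nfx; have := first_posVN primx; rewrite nfx.
Qed.

Variables i j : 'I_d.

Definition swap_coords x : 'rV[int]_d := (\row_k x ord0 (tperm i j k))%R.

Definition swap_rep x := sign_rep (swap_coords x).

Lemma swap_coordsK x : swap_coords (swap_coords x) = x.
Proof. by apply/rowP => k; rewrite !mxE tpermK. Qed.

Lemma swap_coordsN x : swap_coords (- x)%R = (- swap_coords x)%R.
Proof. by apply/rowP => k; rewrite !mxE. Qed.

Lemma absz_swap_rep x k : `|swap_rep x ord0 k| = `|x ord0 (tperm i j k)|.
Proof. by rewrite absz_sign_rep mxE. Qed.

Lemma swap_repK x : inP x -> swap_rep (swap_rep x) = x.
Proof.
case/andP=> primx fx; rewrite /swap_rep {2}/sign_rep.
case: ifP => _; rewrite ?swap_coordsN swap_coordsK ?sign_repN ?sign_rep_id //.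
Qed.

Lemma inBP_swap_rep q x : inBP q x -> inBP q (swap_rep x).
Proof.
case/and3P=> l1x primx _; rewrite /inBP (l1_perm_absz (absz_swap_rep x)) l1x.
apply: inP_sign_rep; rewrite (primitive_perm_absz (s := tperm i j) (x := x)) // => k.
by rewrite mxE.
Qed.

End CoordinateSymmetry.

Lemma sum_absz_BP_coord d q (i j : 'I_d) :
  \sum_(x <- BP d q) `|x ord0 i| = \sum_(x <- BP d q) `|x ord0 j|.
Proof.
have BP_swap_rep : perm_eq (map (swap_rep i j) (BP d q)) (BP d q).
  apply: perm_map_involution_in (uniq_BP d q) _ _ => x; rewrite mem_BP.
    by move=> /inBP_swap_rep; rewrite mem_BP.
  by case/andP=> _ /swap_repK.
rewrite -(perm_big _ BP_swap_rep) big_map.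
by apply: eq_bigr => x _; rewrite absz_swap_rep tpermL.
Qed.

Lemma sum_l1_le_kappa d (L : seq 'rV[int]_d) : \sum_(x <- L) l1 x <= d * kappa L.
Proof.
rewrite exchange_big -[X in X * _]card_ord -sum_nat_const.
by apply: leq_sum => i _; apply: (leq_bigmax (F := fun i => \sum_(x <- L) `|x ord0 i|)).
Qed.

Lemma sum_l1_BP d q : \sum_(x <- BP d q) l1 x = d * kappap d q.
Proof.
apply/eqP; rewrite eqn_leq sum_l1_le_kappa /=.
case: (posnP d) => [-> // | d_gt0]; pose i0 := Ordinal d_gt0.
rewrite exchange_big (eq_bigr _ (fun i _ => sum_absz_BP_coord q i i0)).
rewrite sum_nat_const card_ord leq_mul2l; apply/orP; right.
by apply/bigmax_leqP => i _; rewrite (sum_absz_BP_coord q i i0).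
Qed.

Section Exchange.
Variables (d q : nat) (X : seq 'rV[int]_d).
Hypotheses (uniqX : uniq X) (XP : {in X, forall x, inP x}).

Lemma perm_filter_l1_le :
  perm_eq [seq x <- X | l1 x <= q] [seq x <- BP d q | x \in X].
Proof.
apply: uniq_perm; rewrite ?filter_uniq ?uniq_box // => x.
rewrite [in RHS]mem_filter mem_BP mem_filter /inBP andbC.
by case xX: (x \in X); rewrite //= XP ?andbT.
Qed.

Lemma exchange_l1 :
  q.+1 * size X + count [predC X] (BP d q) + \sum_(x <- X | q < l1 x) (l1 x - q.+1)
    + \sum_(x <- BP d q) l1 x
  <= q.+1 * size (BP d q) + \sum_(x <- X) l1 x.
Proof.
have sumX : \sum_(x <- X) l1 x =
    \sum_(x <- BP d q | x \in X) l1 x + \sum_(x <- X | q < l1 x) l1 x.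
  rewrite (bigID (fun x => l1 x <= q)) -big_filter (perm_big _ perm_filter_l1_le).
  by rewrite big_filter; congr (_ + _); apply: eq_bigl => x; rewrite ltnNge.
have sizeX : size X = count (mem X) (BP d q) + count (fun x => q < l1 x) X.
  rewrite -(count_predC (fun x => l1 x <= q)) -size_filter.
  rewrite (perm_size perm_filter_l1_le) size_filter; congr (_ + _).
  by apply: eq_count => x /=; rewrite ltnNge.
have sumB : \sum_(x <- BP d q) l1 x =
    \sum_(x <- BP d q | x \in X) l1 x + \sum_(x <- BP d q | x \in [predC X]) l1 x.
  exact: bigID.
have sizeB : size (BP d q) = count (mem X) (BP d q) + count [predC X] (BP d q).
  by rewrite -(count_predC (mem X)).
have sum_outside : \sum_(x <- X | q < l1 x) l1 x =
    q.+1 * count (fun x => q < l1 x) X + \sum_(x <- X | q < l1 x) (l1 x - q.+1).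
  exact: sum_nat_sub_const.
have sum_missing : \sum_(x <- BP d q | x \in [predC X]) l1 x <= q * count [predC X] (BP d q).
  by apply: leq_sum_const_seq => x; rewrite mem_BP => /andP[].
lia.
Qed.

Lemma exchange_kappa k : kappa X <= k -> kappap d q <= k ->
  q.+1 * size X + count [predC X] (BP d q) + \sum_(x <- X | q < l1 x) (l1 x - q.+1)
  <= q.+1 * Np d q + d * (k - kappap d q).
Proof.
move=> kX Kk; have := exchange_l1; have := sum_l1_le_kappa X.
rewrite sum_l1_BP mulnBr /Np.
have := leq_mul2l d (kappa X) k; have := leq_mul2l d (kappap d q) k.
rewrite kX Kk; lia.
Qed.

End Exchange.

Lemma exchange_tight d q (X : seq 'rV[int]_d) :
  q.+1 * size X + count [predC X] (BP d q) + \sum_(x <- X | q < l1 x) (l1 x - q.+1)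
    <= q.+1 * size X ->
  {subset BP d q <= X} /\ {in X, forall x, l1 x <= q.+1}.
Proof.
move=> le_sizeX; have /eqP : count [predC X] (BP d q) = 0 by lia.
rewrite -leqn0 leqNgt -has_count => /hasPn BP_in_X.
have /eqP : \sum_(x <- X | q < l1 x) (l1 x - q.+1) = 0 by lia.
rewrite sum_nat_seq_eq0 => /allP X_tight; split=> x.
  by move=> /BP_in_X /negPn.
move=> xX; case: (leqP (l1 x) q) => [/leqW // | qx].
by have /implyP/(_ qx) := X_tight x xX; rewrite subn_eq0.
Qed.

Lemma floor_natr_div (R : archiNumFieldType) (a b : nat) : (0 < b)%N ->
  Num.floor (a%:R / b%:R : R) = Posz (a %/ b).
Proof.
move=> b_gt0; have b_pos : (0 < b%:R :> R)%R by rewrite ltr0n.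
apply: floor_def; rewrite -PoszD addn1 -!pmulrn ler_pdivlMr // ltr_pdivrMr //.
by rewrite -!natrM ler_nat ltr_nat leq_divM ltn_ceil.
Qed.

Lemma lambdaE d k p : (0 < p)%N -> (kappap d p.-1 <= k)%N ->
  lambda d k p = ((p * Np d p.-1 + d * (k - kappap d p.-1))%:R / p%:R)%R.
Proof.
move=> p_gt0 Kk; rewrite /lambda subzn // -PoszM -!pmulrn natrD natrM mulrDl.
by rewrite mulrAC mulfV ?mul1r // pnatr_eq0 -lt0n.
Qed.

Theorem lemma3p1 (d k : nat) (X : seq 'rV[int]_d) (p : nat) :
  (0 < d)%N -> (0 < k)%N ->
  uniq X -> (forall x, x \in X -> inP x) ->
  (kappa X <= k)%N ->
  (0 < p)%N -> (k < kappap d p)%N ->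
  (forall q, (0 < q)%N -> (q < p)%N -> (kappap d q <= k)%N) ->
  (((size X : nat) : int) <= Num.floor (lambda d k p))%R /\
  (((size X : nat) : int) = Num.floor (lambda d k p) ->
   (d %| p)%N -> d != p -> (p %/ d %| k - kappap d p.-1)%N ->
   (forall x : 'rV[int]_d, inBP p.-1 x -> x \in X) /\
   (forall x, x \in X -> inBP p x)).
Proof.
move=> _ _ uniqX XP kX; case: p => // q _ _ kappa_le /=.
have Kk : kappap d q <= k.
  by case: q kappa_le => [|q] kappa_le; [rewrite kappap0 | apply: kappa_le].
have := exchange_kappa uniqX XP kX Kk.
rewrite lambdaE // floor_natr_div //=.
set a := _ + d * _ => bound; split.
  by rewrite lez_nat leq_divRL // mulnC; lia.
move=> [sizeX] d_dvd _ /dvdnP[m km].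
have q1_dvd_a : q.+1 %| a.
  rewrite /a km mulnCA (mulnC d) divnK //.
  by apply: dvdn_add; [apply: dvdn_mulr | apply: dvdn_mull].
have tight : q.+1 * size X = a by rewrite sizeX mulnC divnK.
have [BP_sub_X l1_le] : {subset BP d q <= X} /\ {in X, forall x, l1 x <= q.+1}.
  by apply: exchange_tight; move: bound; rewrite -tight.
split=> [x | x xX]; first by rewrite -mem_BP => /BP_sub_X.
by rewrite /inBP l1_le // XP.
Qed.
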